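(* Let $\mathcal{H}$ be a real Hilbert space and let $C\subset\mathcal{H}$ be a nonempty, closed and convex set with $0\in C$. Then a function $f\in\Gamma_0(\mathcal{H})$ satisfies $$\Vert \operatorname{prox}_f(x)\Vert = d_C(x)\quad\text{for all } x\in\mathcal{H}$$ if and only if $f=\sigma_C+c$ for some constant $c\in\mathbb{R}$.
   Context: $\Gamma_0(\mathcal{H})$ denotes the set of proper, convex, lower semicontinuous functions $\mathcal{H}\to\mathbb{R}\cup\{+\infty\}$. $\operatorname{prox}_f(x)=\operatorname{argmin}_{y\in\mathcal{H}}\{f(y)+\tfrac12\Vert x-y\Vert^2\}$. $d_C(x)=\inf_{c\in C}\Vert x-c\Vert$ is the distance function to $C$, and $\sigma_C(x)=\sup_{y\in C}\langle y,x\rangle$ is the support function of $C$. *)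

From HB Require Import structures.
From mathcomp Require Import all_boot all_order all_algebra.
From mathcomp Require Import all_classical all_reals all_analysis.
Set Implicit Arguments.
Unset Strict Implicit.
Unset Printing Implicit Defensive.
Import Order.TTheory GRing.Theory Num.Theory.
Import numFieldNormedType.Exports.
Local Open Scope classical_set_scope.
Local Open Scope ring_scope.

(* A real Hilbert space: a complete normed space over R whose norm comes
   from an inner product (symmetric, linear in the first argument,
   <x,x> = |x|^2; positive definiteness follows from the norm). *)
Record inner_product (R : realType) (H : completeNormedModType R) := InnerProduct {
  ip :> H -> H -> R ;
  ip_sym : forall x y, ip x y = ip y x ;
  ip_linl : forall (a : R) x y z, ip (a *: x + y) z = a * ip x z + ip y z ;
  ip_normE : forall x, ip x x = `|x| ^+ 2
}.

Section defs.
Context {R : realType} {H : completeNormedModType R}.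
Local Open Scope ereal_scope.

Definition proper_fun (f : H -> \bar R) :=
  (forall x, f x != -oo) /\ (exists x, f x != +oo).

Definition convex_efun (f : H -> \bar R) :=
  forall (x y : H) (t : R), (0 < t < 1)%R ->
    f (t *: x + (1 - t) *: y)%R <= t%:E * f x + (1 - t)%:E * f y.

Definition Gamma0 (f : H -> \bar R) :=
  [/\ proper_fun f, convex_efun f & lower_semicontinuous f].

(* prox_f(x) = argmin_y { f y + 1/2 |x - y|^2 } (chosen via [get]; for
   f in Gamma0 the minimizer exists and is unique) *)
Definition prox (f : H -> \bar R) (x : H) : H :=
  get [set p : H | forall y : H,
        f p + ((2^-1) * `|x - p| ^+ 2)%R%:E <= f y + ((2^-1) * `|x - y| ^+ 2)%R%:E].

Definition dist_set (C : set H) (x : H) : R :=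
  inf [set `|x - c|%R | c in C].

Definition support_fun (ipH : inner_product H) (C : set H) (x : H) : \bar R :=
  ereal_sup [set (ipH y x)%:E | y in C].

Definition convex_subset (C : set H) :=
  forall x y (t : R), C x -> C y -> (0 <= t <= 1)%R -> C (t *: x + (1 - t) *: y)%R.
End defs.

From HB Require Import structures.
From mathcomp Require Import all_boot all_order all_algebra.
From mathcomp Require Import all_classical all_reals all_analysis.
From mathcomp Require Import ring lra.
Set Implicit Arguments.
Unset Strict Implicit.
Unset Printing Implicit Defensive.
Import Order.TTheory GRing.Theory Num.Theory.
Import numFieldNormedType.Exports.
Local Open Scope classical_set_scope.
Local Open Scope ring_scope.

(* Write p = prox_f x and q = x - p.  Minimality of p and convexity of f give
   the first-order condition f w >= f p + <q, w - p> for every w, on which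
   both directions rest.

   If f = sigma_C + c, the condition at w = 0 and w = 2p gives
   <q, p> = sigma_C p, hence <q, w> <= sigma_C w for every w, so q lies in C
   (separate q from C by projecting it, i.e. by the prox of the indicator of
   C).  As moreover <z, p> <= <q, p> for z in C, q is the projection of x on C
   and d_C x = |x - q| = |p|.

   Conversely, if |prox_f| = d_C then prox_f vanishes on C, and the condition
   at a point z of C (where p = 0) reads f >= f 0 + <z, .>, so
   f >= sigma_C + f 0.  At an arbitrary x it gives f p <= f 0 + <q, p> and
   <z, p> <= <q, p> for z in C; together with |p| = d_C x this forces q into
   the closed set C.  Taking x = y / eps, convexity between 0 and p gives
   f (eps p) <= f 0 + sigma_C y with eps p -> y as eps -> 0, and lower
   semicontinuity yields f <= sigma_C + f 0.

   The prox exists because near-minimizers of f + |x - .|^2 / 2 are close to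
   each other by strong convexity: they form a Cauchy filter, whose limit is a
   minimizer by lower semicontinuity. *)

Lemma ler_of_addr_mul01 (R : realFieldType) (x y z : R) :
  (forall t, 0 < t < 1 -> x <= y + t * z) -> x <= y.
Proof.
move=> h; apply/ler_addgt0Pr => e e0.
have nz := normr_ge0 z.
have den : 0 < e + `|z| + 1 by lra.
set t := e / (e + `|z| + 1).
have te : t * (e + `|z| + 1) = e by rewrite /t divfK // gt_eqF.
have t0 : 0 < t by rewrite divr_gt0.
have t1 : t < 1 by rewrite ltr_pdivrMr // mul1r; lra.
have := h t; rewrite t0 t1 => /(_ isT).
have := ler_norm z; nra.
Qed.

Lemma lower_semicontinuousDr (R : realFieldType) (T : topologicalType)
    (f : T -> \bar R) (g : T -> R) :
  lower_semicontinuous f -> continuous g ->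
  lower_semicontinuous (fun y => (f y + (g y)%:E)%E).
Proof.
move=> lf cg x a ha.
have [b bf ab] : exists2 b : R, (b%:E < f x)%E & a < b + g x.
  case: (f x) ha => [r| |] //= ha.
  - by exists ((r + a - g x) / 2); move: ha; rewrite ?lte_fin; lra.
  - by exists (a - g x + 1); [rewrite ltry | lra].
have [V Vx fV] := lf x b bf.
exists (V `&` [set y | a - b < g y]).
  by apply: filterI => //; apply: (cvgr_gt (g x) (cg x)); lra.
move=> y [/fV + /= gyb]; case: (f y) => [r| |] //=; rewrite ?lte_fin => fyb.
- lra.
- by rewrite addye ?ltry.
Qed.

Lemma lower_semicontinuous_cvg_le (R : realFieldType) (T : topologicalType)
    (h : T -> \bar R) (F : set_system T) (p : T) (m : R) :
  ProperFilter F -> lower_semicontinuous h -> F --> p ->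
  (forall e, 0 < e -> F [set y | (h y < (m + e)%:E)%E]) -> (h p <= m%:E)%E.
Proof.
move=> PF lh Fp hF; apply/lee_addgt0Pr => e e0; rewrite leNgt; apply/negP.
rewrite -EFinD => /lh[V /Fp FV hV].
have [y [/hV hy hy']] := filter_ex (filterI FV (hF e e0)).
by have := lt_trans hy hy'; rewrite ltxx.
Qed.

Lemma lower_semicontinuous_ball_le (R : realFieldType) (V : pseudoMetricType R)
    (f : V -> \bar R) (y : V) (M : R) :
  lower_semicontinuous f ->
  (forall e, 0 < e -> exists2 u, ball y e u & (f u <= M%:E)%E) -> (f y <= M%:E)%E.
Proof.
move=> lf hb; rewrite leNgt; apply/negP => /lf[A /nbhs_ballP[e /= e0 eA] fA].
have [u /eA/fA] := hb e e0.
by move=> /lt_le_trans h /h; rewrite ltxx.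
Qed.

Section inner_product_theory.
Variables (R : realType) (H : completeNormedModType R) (ipH : inner_product H).

Lemma ipDl x y z : ipH (x + y) z = ipH x z + ipH y z.
Proof. by have := ip_linl ipH 1 x y z; rewrite scale1r mul1r. Qed.

Lemma ip0l z : ipH 0 z = 0.
Proof. by apply: (addrI (ipH 0 z)); rewrite -ipDl !addr0. Qed.

Lemma ipZl a x z : ipH (a *: x) z = a * ipH x z.
Proof. by have := ip_linl ipH a x 0 z; rewrite !addr0 ip0l addr0. Qed.

Lemma ipNl x z : ipH (- x) z = - ipH x z.
Proof. by rewrite -scaleN1r ipZl mulN1r. Qed.

Lemma ipBl x y z : ipH (x - y) z = ipH x z - ipH y z.
Proof. by rewrite ipDl ipNl. Qed.

Lemma ipDr x y z : ipH z (x + y) = ipH z x + ipH z y.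
Proof. by rewrite !(ip_sym ipH z) ipDl. Qed.

Lemma ip0r z : ipH z 0 = 0.
Proof. by rewrite ip_sym ip0l. Qed.

Lemma ipZr a x z : ipH z (a *: x) = a * ipH z x.
Proof. by rewrite !(ip_sym ipH z) ipZl. Qed.

Lemma ipNr x z : ipH z (- x) = - ipH z x.
Proof. by rewrite !(ip_sym ipH z) ipNl. Qed.

Lemma ipBr x y z : ipH z (x - y) = ipH z x - ipH z y.
Proof. by rewrite !(ip_sym ipH z) ipBl. Qed.

Lemma normD2 (u v : H) : `|u + v| ^+ 2 = `|u| ^+ 2 + 2 * ipH u v + `|v| ^+ 2.
Proof. by rewrite -!(ip_normE ipH) ipDl !ipDr (ip_sym ipH v u); ring. Qed.

Lemma normB2 (u v : H) : `|u - v| ^+ 2 = `|u| ^+ 2 - 2 * ipH u v + `|v| ^+ 2.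
Proof. by rewrite -!(ip_normE ipH) ipBl !ipBr (ip_sym ipH v u); ring. Qed.

Lemma norm_convex_comb2 (x a b : H) (t : R) :
  `|x - (t *: a + (1 - t) *: b)| ^+ 2 =
  t * `|x - a| ^+ 2 + (1 - t) * `|x - b| ^+ 2 - t * (1 - t) * `|a - b| ^+ 2.
Proof.
rewrite -!(ip_normE ipH) !(ipDl, ipDr, ipNl, ipNr, ipZl, ipZr).
by rewrite (ip_sym ipH x a) (ip_sym ipH x b) (ip_sym ipH b a); ring.
Qed.

End inner_product_theory.

Section prox_theory.
Variables (R : realType) (H : completeNormedModType R) (ipH : inner_product H).

Definition prox_obj (f : H -> \bar R) (x y : H) : \bar R :=
  (f y + (2^-1 * `|x - y| ^+ 2)%:E)%E.

Definition is_prox (f : H -> \bar R) (x p : H) :=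
  forall y, (prox_obj f x p <= prox_obj f x y)%E.

Lemma is_prox_subgrad (f : H -> \bar R) (x p : H) (fp : R) :
  (forall y, f y != -oo%E) -> convex_efun f -> is_prox f x p -> f p = fp%:E ->
  forall w, ((fp + ipH (x - p) (w - p))%:E <= f w)%E.
Proof.
move=> fN cvx hp fpE w.
case Efw: (f w) => [fw| |]; [|by rewrite leey|by have := fN w; rewrite Efw].
rewrite lee_fin; apply: (@ler_of_addr_mul01 _ _ _ (2^-1 * `|w - p| ^+ 2)).
move=> t /andP[t0 t1]; set z := t *: w + (1 - t) *: p.
have := cvx w p t; rewrite t0 t1 Efw fpE -!EFinM -EFinD => /(_ isT).
move=> /(leeD2r (2^-1 * `|x - z| ^+ 2)%:E) /(le_trans (hp z)).
rewrite /prox_obj fpE -!EFinD lee_fin (norm_convex_comb2 ipH).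
have -> : x - w = (x - p) - (w - p) by rewrite opprB addrA subrK.
rewrite (normB2 ipH (x - p)); nra.
Qed.

Lemma convex_efun_ball_lb (f : H -> \bar R) (x0 : H) (a0 b r : R) :
  convex_efun f -> f x0 = a0%:E -> 0 < r ->
  (forall z, ball x0 r z -> (b%:E < f z)%E) ->
  forall y, ((b - 2 * (a0 - b) / r * `|y - x0|)%:E <= f y)%E.
Proof.
move=> cvx fx0 r0 lbf y.
have ba0 : b < a0 by rewrite -lte_fin -fx0; apply: lbf; exact: ballxx.
set K := 2 * (a0 - b) / r; set D := `|y - x0|.
have K0 : 0 <= K by rewrite /K divr_ge0 ?ltW //; lra.
have [Dlt|Dge] := ltP D r.
  have yr : ball x0 r y by rewrite -ball_normE /= distrC.
  apply: le_trans (ltW (lbf y yr)); rewrite lee_fin.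
  by have := mulr_ge0 K0 (normr_ge0 (y - x0) : 0 <= D); lra.
have D0 : 0 < D by apply: lt_le_trans Dge.
set t := r / (2 * D).
have t0 : 0 < t by rewrite divr_gt0 // mulr_gt0.
have t1 : t < 1 by rewrite ltr_pdivrMr ?mulr_gt0 //; lra.
have tK : t * K * D = a0 - b by rewrite /t /K; field; rewrite !gt_eqF.
have tD : t * D = r / 2 by rewrite /t; field; rewrite gt_eqF.
have zball : ball x0 r (t *: y + (1 - t) *: x0).
  rewrite -ball_normE /=.
  have -> : x0 - (t *: y + (1 - t) *: x0) = t *: (x0 - y).
    by rewrite scalerBl scale1r scalerBr opprD opprB addrA addrC addrA subrK addrC.
  by rewrite normrZ gtr0_norm // distrC -/D tD; lra.
have := cvx y x0 t; rewrite t0 t1 fx0 => /(_ isT) /(lt_le_trans (lbf _ zball)).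
case: (f y) => [fy| |]; last 2 first.
- by rewrite leey.
- by rewrite gt0_muleNy ?lte_fin // addNye ltNge leNye.
by rewrite -!EFinM -EFinD !lte_fin lee_fin; nra.
Qed.

Lemma Gamma0_affine_minorant (f : H -> \bar R) : Gamma0 f ->
  exists A B : R, 0 <= B /\ forall y, ((A - B * `|y|)%:E <= f y)%E.
Proof.
case=> [[fN [x0 fx0]] cvx lsc].
case Ex0: (f x0) fx0 (fN x0) => [a0| |] // _ _.
have : ((a0 - 1)%:E < f x0)%E by rewrite Ex0 lte_fin; lra.
move=> /lsc[V /nbhs_ballP[r /= r0 rV] fV].
have lb := convex_efun_ball_lb cvx Ex0 r0 (fun z hz => fV z (rV z hz)).
set B := 2 * (a0 - (a0 - 1)) / r in lb.
have B0 : 0 <= B by rewrite /B divr_ge0 ?ltW //; lra.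
exists (a0 - 1 - B * `|x0|), B; split => // y.
apply: le_trans (lb y); rewrite lee_fin.
have : B * `|y - x0| <= B * (`|y| + `|x0|) by rewrite ler_wpM2l // ler_normB.
lra.
Qed.

Lemma prox_obj_bounded_below (f : H -> \bar R) (x : H) : Gamma0 f ->
  exists K : R, forall y, (K%:E <= prox_obj f x y)%E.
Proof.
move=> /Gamma0_affine_minorant[A [B [B0 hAB]]].
exists (A - B * `|x| - B ^+ 2 / 2) => y.
apply: le_trans (leeD2r _ (hAB y)); rewrite -EFinD lee_fin.
have : `|y| <= `|x| + `|x - y|.
  by have := ler_distD x y 0; rewrite !subr0 distrC addrC.
have := sqr_ge0 (B - `|x - y|); nra.
Qed.

Lemma prox_obj_lsc (f : H -> \bar R) (x : H) :
  lower_semicontinuous f -> lower_semicontinuous (prox_obj f x).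
Proof.
move=> lf; apply: lower_semicontinuousDr => // y.
have dist_cvg : (fun z => `|x - z|) @ y --> `|x - y|.
  by apply: cvg_norm; apply: cvgB; [exact: cvg_cst | exact: cvg_id].
by apply: cvgM; [exact: cvg_cst | exact: cvgM].
Qed.

Lemma prox_obj_sublevel_diam (f : H -> \bar R) (x a b : H) (m e : R) :
  convex_efun f -> (forall y, (m%:E <= prox_obj f x y)%E) ->
  (prox_obj f x a < (m + e)%:E)%E -> (prox_obj f x b < (m + e)%:E)%E ->
  `|a - b| ^+ 2 <= 8 * e.
Proof.
move=> cvx hm.
have obj_fin y : (prox_obj f x y < (m + e)%:E)%E -> exists2 r, f y = r%:E &
    r + 2^-1 * `|x - y| ^+ 2 < m + e.
  move: (hm y); rewrite /prox_obj.
  case: (f y) => [r _| //|]; last by rewrite addNye leeNy_eq.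
  by rewrite -EFinD lte_fin; exists r.
move=> /obj_fin[fa Efa ha] /obj_fin[fb Efb hb].
have := cvx a b 2^-1; rewrite invr_gt0 invf_lt1 ?ltr0n ?ltr1n // Efa Efb.
move=> /(_ isT) /(leeD2r (2^-1 * `|x - (2^-1 *: a + (1 - 2^-1) *: b)| ^+ 2)%:E).
move=> /(le_trans (hm _)); rewrite -!EFinM -!EFinD lee_fin (norm_convex_comb2 ipH).
lra.
Qed.

Lemma is_prox_exists (f : H -> \bar R) (x : H) :
  Gamma0 f -> exists p, is_prox f x p.
Proof.
move=> fG; have [K hK] := prox_obj_bounded_below x fG.
have [[fN [x0 fx0]] cvx lsc] := fG.
pose S := [set r : R | exists y, prox_obj f x y = r%:E].
have infS : has_inf S.
  split; last by exists K => r [y Ey]; have := hK y; rewrite Ey lee_fin.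
  case Ex0: (f x0) fx0 (fN x0) => [a0| |] // _ _.
  by exists (a0 + 2^-1 * `|x - x0| ^+ 2), x0; rewrite /prox_obj Ex0.
set m := inf S.
have hm y : (m%:E <= prox_obj f x y)%E.
  case Ey: (prox_obj f x y) => [r| |]; last 2 first.
  - exact: leey.
  - by have := hK y; rewrite Ey leeNy_eq.
  by rewrite lee_fin; apply: ge_inf; [case: infS | exists y].
pose B e := [set y | (prox_obj f x y < (m + e)%:E)%E].
have B0 e : 0 < e -> B e !=set0.
  move=> e0; have [r [y Ey] lt] := inf_adherent e0 infS.
  by exists y; rewrite /B /= Ey lte_fin.
pose F := filter_from [set e : R | 0 < e] B.
have FF : Filter F.
  apply: filter_from_filter; first by exists 1; rewrite /= ltr01.
  move=> i j i0 j0; exists (Num.min i j); first by rewrite /= lt_min i0.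
  move=> y By; split; apply: lt_le_trans By _.
  - by rewrite lee_fin lerD2l ge_min lexx.
  - by rewrite lee_fin lerD2l ge_min lexx orbT.
have PF : ProperFilter F by apply: filter_from_proper.
have /cauchy_cvg Fp : cauchy F.
  apply: cauchy_exP => e e0.
  have e16 : 0 < e ^+ 2 / 16 by rewrite divr_gt0 ?exprn_gt0.
  have [a Ba] := B0 _ e16; exists a, (e ^+ 2 / 16) => // b Bb.
  have := prox_obj_sublevel_diam cvx hm Ba Bb.
  rewrite -ball_normE /=; have := normr_ge0 (a - b); nra.
exists (lim F) => y; apply: le_trans (hm y).
by apply: (lower_semicontinuous_cvg_le PF (prox_obj_lsc lsc) Fp) => e e0; exists e.
Qed.

Lemma prox_is_prox (f : H -> \bar R) (x : H) : Gamma0 f -> is_prox f x (prox f x).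
Proof. by move=> fG; apply: getPex; exact: is_prox_exists. Qed.

Lemma prox_subgrad (f : H -> \bar R) (x : H) : Gamma0 f ->
  exists fp, f (prox f x) = fp%:E /\
  forall w, ((fp + ipH (x - prox f x) (w - prox f x))%:E <= f w)%E.
Proof.
move=> fG; have hp := prox_is_prox x fG.
have [[fN [x0 fx0]] cvx _] := fG.
suff [fp Efp] : exists fp, f (prox f x) = fp%:E.
  by exists fp; split => //; exact: is_prox_subgrad.
move: (hp x0) (fN (prox f x)); rewrite /prox_obj.
by case: (f (prox f x)) => [fp| |] //; [exists fp | case: (f x0) fx0].
Qed.

End prox_theory.

Section distance_and_support.
Variables (R : realType) (H : completeNormedModType R) (ipH : inner_product H).
Implicit Types (C : set H) (x p z : H).

Lemma dist_set_le C x z : C z -> dist_set C x <= `|x - z|.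
Proof. by move=> Cz; apply: ge_inf; [exists 0 => _ [c _ <-] | exists z]. Qed.

Lemma dist_set_ge C x (a : R) : C !=set0 -> (forall z, C z -> a <= `|x - z|) ->
  a <= dist_set C x.
Proof.
move=> [z0 Cz0] h; apply: lb_le_inf; first by exists `|x - z0|, z0.
by move=> _ [z Cz <-]; exact: h.
Qed.

Lemma dist_set_eq0 C z : C z -> dist_set C z = 0.
Proof.
move=> Cz; apply/le_anti/andP; split.
  by have := dist_set_le z Cz; rewrite subrr normr0.
by apply: dist_set_ge; [exists z | move=> w _; exact: normr_ge0].
Qed.

Lemma dist_set_sqr_adherent C x (e : R) : C !=set0 -> 0 < e ->
  exists2 z, C z & `|x - z| ^+ 2 < dist_set C x ^+ 2 + e.
Proof.
move=> [z0 Cz0] e0; set d := dist_set C x.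
have d0 : 0 <= d by apply: dist_set_ge; [exists z0 | move=> z _; exact: normr_ge0].
have den : 0 < 2 * d + 1 + e by lra.
set eta := e / (2 * d + 1 + e).
have eta0 : 0 < eta by rewrite divr_gt0.
have etaE : eta * (2 * d + 1 + e) = e by rewrite divfK ?gt_eqF.
have eta1 : eta < 1 by rewrite ltr_pdivrMr // mul1r; lra.
have hi : has_inf [set `|x - z| | z in C].
  by split; [exists `|x - z0|, z0 | exists 0 => _ [z _ <-]].
have [_ [z Cz <-] lt] := inf_adherent eta0 hi; exists z => //.
have := normr_ge0 (x - z); rewrite -/d in lt; nra.
Qed.

Lemma ip_le_support_fun C z w : C z -> ((ipH z w)%:E <= support_fun ipH C w)%E.
Proof. by move=> Cz; apply: ereal_sup_ubound; exists z. Qed.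

Lemma support_fun_le C w (M : \bar R) :
  (forall z, C z -> ((ipH z w)%:E <= M)%E) -> (support_fun ipH C w <= M)%E.
Proof. by move=> h; apply: ge_ereal_sup => _ [z Cz <-]; exact: h. Qed.

Lemma norm_residual_le C x p : (forall z, C z -> ipH z p <= ipH (x - p) p) ->
  forall z, C z -> `|p| ^+ 2 + `|x - p - z| ^+ 2 <= `|x - z| ^+ 2.
Proof.
move=> hp z Cz; have -> : x - z = p + (x - p - z) by rewrite addrA (addrC p) subrK.
rewrite (normD2 ipH p) ipBr (ip_sym ipH p (x - p)) (ip_sym ipH p z).
by have := hp z Cz; lra.
Qed.

Lemma dist_set_residual C x p : C !=set0 -> C (x - p) ->
  (forall z, C z -> ipH z p <= ipH (x - p) p) -> dist_set C x = `|p|.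
Proof.
move=> C0 Cq hp; apply/le_anti/andP; split.
  by have := dist_set_le x Cq; rewrite opprB addrC subrK.
apply: dist_set_ge => // z Cz.
rewrite -ler_sqr ?nnegrE ?normr_ge0 //.
by have := norm_residual_le hp Cz; have := sqr_ge0 `|x - p - z|; lra.
Qed.

Lemma residual_mem C x p : closed C -> C !=set0 -> `|p| = dist_set C x ->
  (forall z, C z -> ipH z p <= ipH (x - p) p) -> C (x - p).
Proof.
move=> cC C0 pd hp; rewrite (closure_id C).1 // => A /nbhs_ballP[e /= e0 eA].
have [z Cz hz] := dist_set_sqr_adherent x C0 (exprn_gt0 2 e0).
exists z; split => //; apply: eA; rewrite -ball_normE /=.
have := norm_residual_le hp Cz; rewrite -pd in hz.
by have := normr_ge0 (x - p - z); nra.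
Qed.

Definition convex_indic C (y : H) : \bar R := if `[< C y >] then 0%E else +oo%E.

Lemma convex_indic_Gamma0 C : C !=set0 -> closed C -> convex_subset C ->
  Gamma0 (convex_indic C).
Proof.
move=> [z0 Cz0] cC vC; split.
- split; first by move=> y; rewrite /convex_indic; case: ifP.
  by exists z0; rewrite /convex_indic asboolT.
- move=> a b t /andP[t0 t1]; rewrite /convex_indic.
  case: (asboolP (C a)) => Ca; case: (asboolP (C b)) => Cb.
  + by rewrite asboolT ?mule0 ?adde0 //; apply: vC => //; rewrite !ltW.
  + by rewrite mule0 add0e gt0_muley ?lte_fin ?subr_gt0 // leey.
  + by rewrite mule0 adde0 gt0_muley ?lte_fin // leey.
  + by rewrite !gt0_muley ?lte_fin ?subr_gt0 //= leey.
- move=> y a; rewrite /convex_indic; case: (asboolP (C y)) => Cy ha.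
  + by exists setT => [|u _]; [exact: filterT | case: ifP => _ //; rewrite ltry].
  + exists (~` C); first by apply: open_nbhs_nbhs; split => //; exact: closed_openC.
    by move=> u /= nCu; rewrite asboolF // ltry.
Qed.

End distance_and_support.

Section support_function_prox.
Variables (R : realType) (H : completeNormedModType R) (ipH : inner_product H).

Lemma mem_of_ip_le_support_fun (C : set H) (q : H) :
  C !=set0 -> closed C -> convex_subset C ->
  (forall w, ((ipH q w)%:E <= support_fun ipH C w)%E) -> C q.
Proof.
move=> C0 cC vC hq.
have [fp [Efp sg]] := prox_subgrad ipH q (convex_indic_Gamma0 C0 cC vC).
set P := prox (convex_indic C) q in Efp sg.
have CP : C P by move: Efp; rewrite /convex_indic; case: (asboolP (C P)).
have fp0 : fp = 0 by move: Efp; rewrite /convex_indic asboolT // => -[].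
have obtuse z : C z -> ipH (q - P) (z - P) <= 0.
  by move=> Cz; have := sg z; rewrite /convex_indic asboolT // fp0 add0r lee_fin.
have : ((ipH q (q - P))%:E <= (ipH P (q - P))%:E)%E.
  apply: le_trans (hq _) (support_fun_le _) => z Cz; rewrite lee_fin.
  by have := obtuse z Cz; rewrite (ip_sym ipH (q - P)) ipBl; lra.
rewrite lee_fin -subr_le0 -ipBl (ip_normE ipH) => qP.
have : `|q - P| <= 0 by have := normr_ge0 (q - P); nra.
by rewrite normr_le0 subr_eq0 => /eqP ->.
Qed.

Lemma support_fun_prox_norm (C : set H) (f : H -> \bar R) (c : R) :
  C !=set0 -> closed C -> convex_subset C -> Gamma0 f ->
  f = (fun x => (support_fun ipH C x + c%:E)%E) ->
  forall x, `|prox f x| = dist_set C x.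
Proof.
move=> C0 cC vC fG fE x.
have [fp [Efp sg]] := prox_subgrad ipH x fG.
set p := prox f x in Efp sg *; set q := x - p in sg.
have [s Es] : exists s, support_fun ipH C p = s%:E.
  by move: Efp; rewrite fE; case: (support_fun ipH C p) => [s| |] //; exists s.
have fps : fp = s + c by move: Efp; rewrite fE Es => -[].
have {}sg w : ((s + ipH q (w - p))%:E <= support_fun ipH C w)%E.
  by move: (sg w); rewrite fE fps -leeBlDr // -EFinB addrAC addrK.
have qp : ipH q p = s.
  apply/le_anti/andP; split.
  - have : (support_fun ipH C (p + p)%R <= (s + s)%:E)%E.
      apply: support_fun_le => z Cz; rewrite ipDr lee_fin.
      by have := ip_le_support_fun ipH p Cz; rewrite Es lee_fin; lra.
    by move=> /(le_trans (sg (p + p))); rewrite addrK lee_fin; lra.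
  - have : (support_fun ipH C 0%R <= 0%:E)%E.
      by apply: support_fun_le => z _; rewrite ip0r.
    by move=> /(le_trans (sg 0)); rewrite sub0r ipNr lee_fin; lra.
have Cq : C q.
  apply: mem_of_ip_le_support_fun => // w.
  by have := sg w; rewrite ipBr qp (addrC s) subrK.
apply/esym/dist_set_residual => // z Cz.
by have := ip_le_support_fun ipH p Cz; rewrite Es lee_fin -qp; apply.
Qed.

End support_function_prox.

Section prox_norm_dist.
Variables (R : realType) (H : completeNormedModType R) (ipH : inner_product H).
Variables (C : set H) (f : H -> \bar R).
Hypotheses (zC : C 0) (cC : closed C) (fG : Gamma0 f).
Hypothesis prox_dist : forall x, `|prox f x| = dist_set C x.

Lemma prox_eq0 z : C z -> prox f z = 0.
Proof. by move=> Cz; apply/normr0_eq0; rewrite prox_dist dist_set_eq0. Qed.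

Let c := fine (f 0).

Lemma f0E : f 0 = c%:E.
Proof.
have [fp [Efp _]] := prox_subgrad ipH 0 fG.
by move: Efp; rewrite /c (prox_eq0 zC) => ->.
Qed.

Lemma ip_le_f z w : C z -> ((c + ipH z w)%:E <= f w)%E.
Proof.
move=> Cz; have [fp [Efp sg]] := prox_subgrad ipH z fG.
rewrite (prox_eq0 Cz) in Efp sg.
have -> : c = fp by move: Efp; rewrite f0E => -[].
by have := sg w; rewrite !subr0.
Qed.

Lemma support_fun_shift_le_f y : (support_fun ipH C y + c%:E <= f y)%E.
Proof.
have [[fN _] _ _] := fG.
case Efy: (f y) (fN y) => [r| |] // _; last exact: leey.
rewrite -leeBrDr // -EFinB; apply: support_fun_le => z Cz.
by have := ip_le_f y Cz; rewrite Efy !lee_fin; lra.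
Qed.

Lemma prox_le_ip x : (f (prox f x) <= (c + ipH (x - prox f x) (prox f x))%:E)%E.
Proof.
have [fp [Efp sg]] := prox_subgrad ipH x fG.
by have := sg 0; rewrite f0E Efp sub0r ipNr !lee_fin; lra.
Qed.

Lemma ip_prox_le z x : C z -> ipH z (prox f x) <= ipH (x - prox f x) (prox f x).
Proof.
by move=> Cz; have := le_trans (ip_le_f _ Cz) (prox_le_ip x); rewrite lee_fin; lra.
Qed.

Lemma residual_prox_mem x : C (x - prox f x).
Proof. by apply: residual_mem => //; [exists 0 | move=> z; exact: ip_prox_le]. Qed.

Lemma scaled_prox_le y (s eps : R) :
  (support_fun ipH C y <= s%:E)%E -> 0 < eps < 1 ->
  let u := eps *: prox f (eps^-1 *: y) in
  (f u <= (c + s)%:E)%E /\ `|y - u| ^+ 2 <= eps * s.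
Proof.
move=> hs /andP[e0 e1] /=; have [_ cvx _] := fG.
set x := eps^-1 *: y; set p := prox f x; set q := x - p.
have yE : y = eps *: x by rewrite /x scalerA mulfV ?gt_eqF // scale1r.
have xq : x - q = p by rewrite /q opprB addrC subrK.
have qy : ipH q y <= s.
  have := ip_le_support_fun ipH y (residual_prox_mem x).
  by move=> /le_trans/(_ hs); rewrite lee_fin.
have qp0 : 0 <= ipH q p by have := @ip_prox_le 0 x zC; rewrite ip0l.
have qpE : eps * ipH q p = ipH q y - eps * `|q| ^+ 2.
  by rewrite yE ipZr -(ip_normE ipH) -mulrBr -ipBr xq.
split.
- have := cvx p 0 eps; rewrite e0 e1 scaler0 addr0 f0E => /(_ isT) /le_trans; apply.
  have eps_fp := lee_wpmul2l (ltW (e0 : (0 < eps%:E)%E)) (prox_le_ip x).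
  apply: le_trans (leeD2r _ eps_fp) _; rewrite -!EFinM -EFinD lee_fin.
  by have := mulr_ge0 (ltW e0) (sqr_ge0 `|q|); nra.
- have -> : y - eps *: p = eps *: q by rewrite yE -scalerBr.
  rewrite normrZ gtr0_norm // exprMn.
  by have := mulr_ge0 (ltW e0) (sqr_ge0 `|q|); nra.
Qed.

Lemma f_le_support_fun_shift y : (f y <= support_fun ipH C y + c%:E)%E.
Proof.
have [_ _ lsc] := fG.
have : (0%:E <= support_fun ipH C y)%E by rewrite -(ip0l ipH y) ip_le_support_fun.
case Es: (support_fun ipH C y) => [s| |] //; last by rewrite addye ?leey.
rewrite lee_fin -EFinD addrC => s0.
apply: (lower_semicontinuous_ball_le lsc) => e e0.
have den : 0 < e ^+ 2 + s + 1 by have := sqr_ge0 e; lra.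
set eps := e ^+ 2 / (e ^+ 2 + s + 1).
have eps0 : 0 < eps by rewrite divr_gt0 ?exprn_gt0.
have epsE : eps * (e ^+ 2 + s + 1) = e ^+ 2 by rewrite divfK ?gt_eqF.
have eps1 : eps < 1 by rewrite ltr_pdivrMr // mul1r; lra.
have hs : (support_fun ipH C y <= s%:E)%E by rewrite Es.
have eps01 : 0 < eps < 1 by rewrite eps0 eps1.
have [fu du] := scaled_prox_le hs eps01.
exists (eps *: prox f (eps^-1 *: y)) => //.
rewrite -ball_normE /=; have := normr_ge0 (y - eps *: prox f (eps^-1 *: y)).
have := exprn_gt0 2 e0; nra.
Qed.

End prox_norm_dist.

Theorem corollary1 (R : realType) (H : completeNormedModType R)
  (ipH : inner_product H) (C : set H) (f : H -> \bar R) :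
  C !=set0 -> closed C -> convex_subset C -> C 0 ->
  Gamma0 f ->
  ((forall x : H, `|prox f x| = dist_set C x) <->
   (exists c : R, f = (fun x => (support_fun ipH C x + c%:E)%E))).
Proof.
move=> Cne cC vC zC fG; split.
- move=> prox_dist; exists (fine (f 0)); apply/funext => y; apply/le_anti.
  by rewrite f_le_support_fun_shift ?support_fun_shift_le_f.
- by move=> [c fE]; exact: support_fun_prox_norm fE.
Qed.
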